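(* Let $n\ge1$, $m\ge1$ and let $v$ be a vertex of $Y_{n,m}$, regarded also as a vertex of $Z_{n,m}$. Then $d_{Z_{n,m}}(v,0)=d_{Y_{n,m}}(v,0)$.
   Context: The Yoke graph $Y_{n,m}$ has vertices the tuples $v=(v_0,\dots,v_{m+1})$ with $v_0,v_{m+1}\in\mathbb{Z}_n$, $v_1,\dots,v_m\in\{0,1\}$, $\sum v_i\equiv0\pmod n$; the dYoke graph $Z_{n,m}$ is defined identically but with $v_1,\dots,v_m\in\{-1,0,1\}$, so the vertex set of $Y_{n,m}$ is contained in that of $Z_{n,m}$. In both, $u\sim v$ iff there is $0\le i\le m$ with $u_j=v_j$ for $j\notin\{i,i+1\}$ and either ($u_i=v_i+1$, $u_{i+1}=v_{i+1}-1$) or ($u_i=v_i-1$, $u_{i+1}=v_{i+1}+1$), buckets mod $n$. $0$ is the all-zero vertex. *)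

From mathcomp Require Import all_boot all_order all_algebra.
Unset Printing Implicit Defensive.
Import Order.TTheory GRing.Theory Num.Theory.
Local Open Scope ring_scope.

(* Coordinates 0 and m+1
   are the "buckets", elements of Z_n represented by 0 <= v_j < n. *)
Definition vtx (m : nat) := {ffun 'I_m.+2 -> int}.

Definition is_bucket (m : nat) (j : 'I_m.+2) : bool :=
  (val j == 0%N) || (val j == m.+1).

Definition Yvals : seq int := [:: 0; 1].
Definition Zvals : seq int := [:: -1; 0; 1].

Definition is_vertex (S : seq int) (n m : nat) (v : vtx m) : Prop :=
  (forall j : 'I_m.+2,
      if is_bucket m j then (0 <= v j) && (v j < n%:Z) else v j \in S)
  /\ ((\sum_(j < m.+2) v j) %% n%:Z = 0)%Z.

Definition step_eq (n m : nat) (j : 'I_m.+2) (a b d : int) : bool :=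
  if is_bucket m j then ((a - (b + d)) %% n%:Z == 0)%Z else a == b + d.

Definition adj (n m : nat) (u v : vtx m) : Prop :=
  exists i : 'I_m.+1,
    let p : 'I_m.+2 := widen_ord (leqnSn m.+1) i in
    let q : 'I_m.+2 := lift ord0 i in
    (forall j : 'I_m.+2, j != p -> j != q -> u j = v j) /\
    ((step_eq n m p (u p) (v p) 1 && step_eq n m q (u q) (v q) (-1)) \/
     (step_eq n m p (u p) (v p) (-1) && step_eq n m q (u q) (v q) 1)).

Definition walk (S : seq int) (n m : nat) (u w : vtx m) (k : nat) : Prop :=
  exists x : nat -> vtx m,
    [/\ x 0%N = u, x k = w,
        (forall i, (i <= k)%N -> is_vertex S n m (x i)) &
        (forall i, (i < k)%N -> adj n m (x i) (x i.+1))].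

(* d is the graph distance from u to w (undefined if no walk exists). *)
Definition graph_dist (S : seq int) (n m : nat) (u w : vtx m) (d : nat) : Prop :=
  walk S n m u w d /\ (forall k, (k < d)%N -> ~ walk S n m u w k).

Definition zero_vtx (m : nat) : vtx m := [ffun => 0].

From mathcomp Require Import all_boot all_order all_algebra zify ring.
Import Order.TTheory GRing.Theory Num.Theory.
Set Implicit Arguments. Unset Strict Implicit.
Local Open Scope ring_scope.

(* Lift the bucket v_0 to an integer c = v_0 (mod n) and let F_j = c + v_1 + ... + v_j
   (0 <= j <= m): the net amount that has to cross the edge between positions j and j+1
   on the way to 0.  The potential of (v, c) is the sum of the |F_j|.  An edge of either
   graph shifts one unit across one position, which changes a single F_j by one (after
   shifting c as well when position 0 is involved), so a walk of length k from v to 0 in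
   Z_{n,m} yields a lift c of potential at most k.  Conversely, when all v_j are 0 or 1
   the F_j are nondecreasing in steps of 0 or 1, and at the first point of the top level
   of F (if it is positive) or the last point of the bottom level (if it is negative) a
   move that stays inside Y_{n,m} lowers the potential by exactly one; potential 0 forces
   v = 0.  Hence d_Y(v, 0) <= potential <= d_Z(v, 0) <= d_Y(v, 0). *)

Local Notation lpos i := (widen_ord (leqnSn _) i).
Local Notation rpos i := (lift ord0 i).

Lemma dvdz_eq0_small (x n : int) : (n %| x)%Z -> 0 <= x < n -> x = 0.
Proof. by move=> /dvdz_mod0P x0 /modz_small xn; rewrite -xn. Qed.

Lemma dvdz_subr_modz (x n : int) : (n %| x - (x %% n)%Z)%Z.
Proof. by rewrite {1}(divz_eq x n) addrK dvdz_mull. Qed.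

Lemma absz_add_sign (x e : int) : e = 1 \/ e = -1 -> (absz (x + e)%R <= (absz x).+1)%N.
Proof. by case=> ->; lia. Qed.

Lemma absz_add_sign_eq (x e : int) : e = 1 \/ e = -1 -> 0 < e * (x + e) ->
  absz (x + e) = (absz x).+1.
Proof. by case=> ->; lia. Qed.

Lemma sum_absz_bump k (f : 'I_k -> int) (i : 'I_k) (e : int) : e = 1 \/ e = -1 ->
  (\sum_j absz (f j + e *+ (j == i))%R <= (\sum_j absz (f j)).+1)%N.
Proof.
move=> he; rewrite (bigD1 i) //= [X in (_ <= X.+1)%N](bigD1 i) //= eqxx -addSn.
rewrite leq_add ?absz_add_sign //; apply/eq_leq/eq_bigr => j /negPf ->.
by rewrite addr0.
Qed.

Lemma sum_absz_bump_eq k (f : 'I_k -> int) (i : 'I_k) (e : int) :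
  e = 1 \/ e = -1 -> 0 < e * (f i + e) ->
  (\sum_j absz (f j + e *+ (j == i))%R)%N = (\sum_j absz (f j)).+1.
Proof.
move=> he hpos; rewrite (bigD1 i) //= [X in _ = X.+1](bigD1 i) //= eqxx -addSn.
rewrite absz_add_sign_eq //; congr (_ + _)%N; apply/eq_bigr => j /negPf ->.
by rewrite addr0.
Qed.

Lemma is_bucket_lpos m (i : 'I_m.+1) : is_bucket m (lpos i) = (i == 0%N :> nat).
Proof. by rewrite /is_bucket /=; have := ltn_ord i; lia. Qed.

Lemma is_bucket_rpos m (i : 'I_m.+1) : is_bucket m (rpos i) = (i == m :> nat).
Proof. by rewrite /is_bucket /= /bump /=; have := ltn_ord i; lia. Qed.

Lemma rpos_neq_lpos m (i : 'I_m.+1) : rpos i != lpos i.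
Proof. by rewrite -val_eqE /= /bump /=; lia. Qed.

Lemma step_eq_dvdz n m j (a b d : int) : step_eq n m j a b d -> (n%:Z %| a - b - d)%Z.
Proof.
rewrite /step_eq; case: ifP => _ /eqP; first by move/dvdz_mod0P; rewrite opprD addrA.
by move=> ->; rewrite (addrC b) addrK subrr dvdz0.
Qed.

Lemma step_eq_interior n m j (a b d : int) :
  ~~ is_bucket m j -> step_eq n m j a b d -> a = b + d.
Proof. by rewrite /step_eq => /negbTE -> /eqP. Qed.

Definition coord m (u : vtx m) (k : nat) : int := u (inord k).

Lemma coord_val m (u : vtx m) (j : 'I_m.+2) : coord u j = u j.
Proof. by rewrite /coord inord_val. Qed.

Fixpoint flow m (u : vtx m) (c : int) (j : nat) : int :=
  if j is j'.+1 then flow u c j' + coord u j else c.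

Definition potential m (u : vtx m) (c : int) : nat := (\sum_(j < m.+1) absz (flow u c j))%N.

Definition moves n m (u v : vtx m) (i : 'I_m.+1) (e : int) : Prop :=
  [/\ forall j, j != lpos i -> j != rpos i -> u j = v j,
      step_eq n m (lpos i) (u (lpos i)) (v (lpos i)) e &
      step_eq n m (rpos i) (u (rpos i)) (v (rpos i)) (- e)].

Lemma adj_moves n m (u v : vtx m) :
  adj n m u v <-> exists i e, (e = 1 \/ e = -1) /\ moves n u v i e.
Proof.
split.
  case=> i /= [huv [/andP [hp hq] | /andP [hp hq]]].
    by exists i, 1; split; [left | split].
  by exists i, (-1); split; [right | split; rewrite ?opprK].
case=> i [e [[->|->] [huv hp hq]]]; exists i; split => //.
  by left; apply/andP.
by right; rewrite opprK in hq; apply/andP.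
Qed.

Section Moves.
Variables (n m : nat) (u v : vtx m) (i : 'I_m.+1) (e : int).
Hypothesis huv : moves n u v i e.

Lemma moves_bucket0 : (n%:Z %| u ord0 - v ord0 - e *+ (i == 0%N :> nat))%Z.
Proof.
case: huv => hother hp _; case: (eqVneq (i : nat) 0%N) => hi.
  have -> : ord0 = lpos i by apply: ord_inj; rewrite /= hi.
  exact: step_eq_dvdz hp.
rewrite hother ?subrr ?dvdz0 // -val_eqE /= /bump /=; lia.
Qed.

Lemma moves_coord k : (1 <= k <= m)%N ->
  coord u k = coord v k + e *+ (k == i) - e *+ (k == i.+1).
Proof.
move=> hk; have vk : nat_of_ord (inord k : 'I_m.+2) = k by rewrite inordK //; lia.
case: huv => hother hp hq; rewrite /coord.
case: (eqVneq k i) => [ki | nki].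
  have -> : inord k = lpos i by apply: ord_inj; rewrite vk.
  have interior : ~~ is_bucket m (lpos i) by rewrite is_bucket_lpos; lia.
  rewrite (step_eq_interior interior hp) ki (_ : (i == i.+1 :> nat) = false);
    by [rewrite mulr0n mulr1n; ring | lia].
case: (eqVneq k i.+1) => [ki | nki1].
  have -> : inord k = rpos i by apply: ord_inj; rewrite vk /= /bump /=; lia.
  have interior : ~~ is_bucket m (rpos i) by rewrite is_bucket_rpos; lia.
  rewrite (step_eq_interior interior hq) mulr0n mulr1n; ring.
rewrite hother ?mulr0n; first by ring.
  by rewrite -val_eqE /= vk.
by rewrite -val_eqE /= vk /bump /=; lia.
Qed.

Lemma moves_flow c j : (j <= m)%N ->
  flow u (c + e *+ (i == 0%N :> nat)) j = flow v c j + e *+ (j == i).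
Proof.
elim: j => [|j IH] hj /=; first by rewrite eq_sym.
rewrite IH ?(ltnW hj) // moves_coord ?hj // eqSS; ring.
Qed.

Lemma moves_lift c :
  (n%:Z %| c + e *+ (i == 0%N :> nat) - u ord0)%Z = (n%:Z %| c - v ord0)%Z.
Proof.
have -> : c + e *+ (i == 0%N :> nat) - u ord0 =
  (c - v ord0) - (u ord0 - v ord0 - e *+ (i == 0%N :> nat)) by ring.
by rewrite rpredBr ?moves_bucket0.
Qed.

Lemma moves_sum : (n%:Z %| \sum_j u j - \sum_j v j)%Z.
Proof.
case: huv => hother hp hq.
rewrite -sumrB (bigD1 (lpos i)) //= (bigD1 (rpos i)) /=; last by rewrite rpos_neq_lpos.
rewrite big1 => [|j /andP [jp jq]]; last by rewrite hother ?subrr.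
have -> : forall a b c d : int, a - b + (c - d + 0) = (a - b - e) + (c - d - - e)
  by move=> *; ring.
by rewrite rpredD ?(step_eq_dvdz hp) ?(step_eq_dvdz hq).
Qed.

Lemma potential_moves c : potential u (c + e *+ (i == 0%N :> nat)) =
  (\sum_(j < m.+1) absz (flow v c j + e *+ (j == i))%R)%N.
Proof. by apply: eq_bigr => j _; rewrite moves_flow // -ltnS. Qed.

Lemma potential_moves_le c : e = 1 \/ e = -1 ->
  (potential u (c + e *+ (i == 0%N :> nat)) <= (potential v c).+1)%N.
Proof. by move=> he; rewrite potential_moves; apply: sum_absz_bump. Qed.

Lemma potential_moves_eq c : e = 1 \/ e = -1 ->
  0 < e * flow u (c + e *+ (i == 0%N :> nat)) i ->
  potential u (c + e *+ (i == 0%N :> nat)) = (potential v c).+1.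
Proof.
rewrite (moves_flow _ (ltn_ord i)) eqxx => he hpos.
by rewrite potential_moves; apply: sum_absz_bump_eq.
Qed.

End Moves.

Lemma walk0 S n m (u w : vtx m) : walk S n m u w 0 <-> u = w /\ is_vertex S n m u.
Proof.
split; first by case=> x [<- <- hv _]; split=> //; exact: hv.
by case=> <- hu; exists (fun=> u).
Qed.

Lemma walkS S n m (u w : vtx m) k : walk S n m u w k.+1 <->
  is_vertex S n m u /\ exists2 u', adj n m u u' & walk S n m u' w k.
Proof.
split.
  case=> x [x0 xk xv xa]; split; first by rewrite -x0; exact: xv.
  exists (x 1%N); first by rewrite -x0; exact: xa.
  by exists (fun j => x j.+1); split => // j hj; [exact: xv | exact: xa].
case=> hu [u' huu' [x [x0 xk xv xa]]].
exists (fun j => if j is j'.+1 then x j' else u); split => //.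
  by case=> [|j] hj //; exact: xv.
by case=> [|j] hj /=; [rewrite x0 | exact: xa].
Qed.

Lemma walk_sub S T n m (u w : vtx m) k : {subset S <= T} ->
  walk S n m u w k -> walk T n m u w k.
Proof.
move=> sST [x [x0 xk xv xa]]; exists x; split => // j /xv [hv hs]; split => // l.
by have := hv l; case: ifP => // _ /sST.
Qed.

Lemma potential_zero m : potential (zero_vtx m) 0 = 0%N.
Proof.
have flow0 j : flow (zero_vtx m) 0 j = 0 by elim: j => //= j ->; rewrite /coord ffunE.
by apply: big1 => j _; rewrite flow0.
Qed.

Lemma walk_potential_le S n m (u : vtx m) k : walk S n m u (zero_vtx m) k ->
  exists2 c, (n%:Z %| c - u ord0)%Z & (potential u c <= k)%N.
Proof.
elim: k u => [|k IH] u.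
  by case/walk0 => -> _; exists 0; rewrite ?potential_zero // ffunE subrr dvdz0.
case/walkS => _ [v /adj_moves [i [e [he huv]]] /IH [c hc hpot]].
exists (c + e *+ (i == 0%N :> nat)); first by rewrite (moves_lift huv).
exact: leq_trans (potential_moves_le huv c he) _.
Qed.

Lemma flow_eq0 m (u : vtx m) c j : potential u c = 0%N -> (j <= m)%N -> flow u c j = 0.
Proof.
move=> h0 hj; apply/eqP; rewrite -absz_eq0 -leqn0 -h0.
by rewrite /potential (bigD1 (Ordinal (hj : (j < m.+1)%N))) //= leq_addr.
Qed.

Lemma vertex_bucket_eq0 S n m (u : vtx m) j : is_vertex S n m u -> is_bucket m j ->
  (n%:Z %| u j)%Z -> u j = 0.
Proof. by case=> hv _ hb /dvdz_eq0_small; apply; have := hv j; rewrite hb. Qed.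

Lemma potential_eq0 S n m (u : vtx m) c : is_vertex S n m u ->
  (n%:Z %| c - u ord0)%Z -> potential u c = 0%N -> u = zero_vtx m.
Proof.
move=> hu hc h0; have hflow := flow_eq0 h0.
have hinterior k : (1 <= k <= m)%N -> coord u k = 0.
  case: k => [//|k] hk; have := hflow k.+1; rewrite /= hflow; last by lia.
  by rewrite add0r; apply; case/andP: hk.
have hu0 : u ord0 = 0.
  apply: (vertex_bucket_eq0 hu) => //.
  have c0 : c = 0 := hflow 0%N (leq0n m).
  by move: hc; rewrite c0 sub0r rpredN.
have hbelow (j : 'I_m.+2) : j != ord_max -> u j = 0.
  case: (eqVneq (j : nat) 0%N) => [j0 | jn0] jm.
    by rewrite (_ : j = ord0) //; apply: ord_inj.
  rewrite -coord_val hinterior //; move: jm; rewrite -val_eqE /=.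
  by have := ltn_ord j; lia.
have hmax : u ord_max = 0.
  apply: (vertex_bucket_eq0 hu); first by rewrite /is_bucket eqxx orbT.
  by case: hu => _ /dvdz_mod0P; rewrite (bigD1 ord_max) //= big1 ?addr0.
apply/ffunP => j; rewrite ffunE.
by case: (eqVneq j ord_max) => [->|]; [exact: hmax | exact: hbelow].
Qed.

Definition reduce_bucket n m (j : 'I_m.+2) (x : int) : int :=
  if is_bucket m j then (x %% n%:Z)%Z else x.

Definition move n m (u : vtx m) (i : 'I_m.+1) (e : int) : vtx m :=
  [ffun j => if j == lpos i then reduce_bucket n j (u j - e)
             else if j == rpos i then reduce_bucket n j (u j + e) else u j].

Lemma step_eq_reduce_bucket n m j (x d : int) :
  step_eq n m j x (reduce_bucket n j (x - d)) d.
Proof.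
rewrite /step_eq /reduce_bucket; case: (is_bucket m j); apply/eqP; last by ring.
apply/dvdz_mod0P; rewrite opprD addrA addrAC.
exact: dvdz_subr_modz.
Qed.

Lemma move_moves n m (u : vtx m) i e : moves n u (move n u i e) i e.
Proof.
split; rewrite ?ffunE ?eqxx.
- by move=> j hp hq; rewrite ffunE (negbTE hp) (negbTE hq).
- exact: step_eq_reduce_bucket.
- by rewrite (negbTE (rpos_neq_lpos i)) -{1}(opprK e); apply: step_eq_reduce_bucket.
Qed.

Lemma move_vertex S n m (u : vtx m) (i : 'I_m.+1) (e : int) :
  (0 < n)%N -> is_vertex S n m u ->
  (i == 0%N :> nat) || (coord u i - e \in S) ->
  (i == m :> nat) || (coord u i.+1 + e \in S) ->
  is_vertex S n m (move n u i e).
Proof.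
move=> hn hu hl hr; have [hv hs] := hu; split.
  have reduced x : (0 <= (x %% n%:Z)%Z) && ((x %% n%:Z)%Z < n%:Z).
    by rewrite modz_ge0 ?ltz_pmod // eqz_nat -lt0n.
  move=> j; rewrite ffunE /reduce_bucket.
  case: (eqVneq j (lpos i)) => [->|jl].
    case hb: (is_bucket m (lpos i)); first exact: reduced.
    by move: hl; rewrite -is_bucket_lpos hb -(coord_val u (lpos i)).
  case: (eqVneq j (rpos i)) => [->|jr]; last exact: hv.
  case hb: (is_bucket m (rpos i)); first exact: reduced.
  by move: hr; rewrite -is_bucket_rpos hb -(coord_val u (rpos i)).
apply/dvdz_mod0P; move/dvdz_mod0P: hs => hs.
by rewrite -(rpredBl _ hs) (moves_sum (move_moves n u i e)).
Qed.

Section YokeDescent.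
Variables (n m : nat) (u : vtx m) (c : int).
Hypothesis hY : is_vertex Yvals n m u.

Lemma Yvertex_coord k : (1 <= k <= m)%N -> coord u k = 0 \/ coord u k = 1.
Proof.
case: hY => hv _ hk; have := hv (inord k).
rewrite /is_bucket /= inordK; last by lia.
rewrite (_ : (k == 0%N) || (k == m.+1) = false); last by lia.
by rewrite /coord !inE => /orP [] /eqP; auto.
Qed.

Lemma flow_leS k : (k < m)%N -> flow u c k <= flow u c k.+1.
Proof.
move=> hk; have hk1 : (1 <= k.+1 <= m)%N by lia.
by rewrite /=; case: (Yvertex_coord hk1) => ->; lia.
Qed.

Lemma flow_nondecr j j' : (j <= j' <= m)%N -> flow u c j <= flow u c j'.
Proof.
elim: j' => [|j' IH] /andP [hjj' hj'].
  by move: hjj'; rewrite leqn0 => /eqP ->.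
case: (ltngtP j j'.+1) hjj' => // [hlt | ->] _ //.
by apply: le_trans (IH _) (flow_leS hj'); lia.
Qed.

Lemma descent_pos : 0 < flow u c m -> exists i : 'I_m.+1,
  [/\ 0 < flow u c i, (i == 0%N :> nat) || (coord u i - 1 \in Yvals)
    & (i == m :> nat) || (coord u i.+1 + 1 \in Yvals)].
Proof.
move=> hm.
have ex_top : exists j, (j <= m)%N && (flow u c j == flow u c m).
  by exists m; rewrite leqnn eqxx.
case: (ex_minnP ex_top) => i /andP [him /eqP hi] hmin.
exists (Ordinal (him : (i < m.+1)%N)); split => /=; first by rewrite hi.
  case: i him hi hmin => [//|i] him hi hmin; apply/orP; right.
  have hk : (1 <= i.+1 <= m)%N by lia.
  case: (Yvertex_coord hk) => hu; last by rewrite hu subrr inE.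
  have := hmin i; rewrite -hi /= hu addr0 eqxx; lia.
case: (eqVneq i m) => [// | hnm].
apply/orP; right; have hk : (1 <= i.+1 <= m)%N by lia.
case: (Yvertex_coord hk) => hu; first by rewrite hu add0r inE.
have : flow u c i.+1 <= flow u c m by apply: flow_nondecr; lia.
by rewrite /= hu hi; lia.
Qed.

Lemma descent_neg : flow u c 0 < 0 -> exists i : 'I_m.+1,
  [/\ 0 < - flow u c i, (i == 0%N :> nat) || (coord u i + 1 \in Yvals)
    & (i == m :> nat) || (coord u i.+1 - 1 \in Yvals)].
Proof.
move=> h0.
have ex_bot : exists j, (j <= m)%N && (flow u c j == flow u c 0).
  by exists 0%N; rewrite leq0n eqxx.
have ub_bot j : (j <= m)%N && (flow u c j == flow u c 0) -> (j <= m)%N by case/andP.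
case: (ex_maxnP ex_bot ub_bot) => i /andP [him /eqP hi] hmax.
exists (Ordinal (him : (i < m.+1)%N)); split => /=; first by rewrite hi oppr_gt0.
  case: i him hi hmax => [//|i] him hi hmax; apply/orP; right.
  have hk : (1 <= i.+1 <= m)%N by lia.
  case: (Yvertex_coord hk) => hu; first by rewrite hu add0r inE.
  have : flow u c 0 <= flow u c i by apply: flow_nondecr; lia.
  by move: hi; rewrite /= hu; lia.
case: (eqVneq i m) => [// | hnm].
apply/orP; right; have hk : (1 <= i.+1 <= m)%N by lia.
case: (Yvertex_coord hk) => hu; last by rewrite hu subrr inE.
have := hmax i.+1; rewrite /= hu addr0 hi eqxx; lia.
Qed.

Lemma exists_descent k : potential u c = k.+1 ->
  exists (i : 'I_m.+1) (e : int),
  [/\ e = 1 \/ e = -1, 0 < e * flow u c i,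
      (i == 0%N :> nat) || (coord u i - e \in Yvals)
    & (i == m :> nat) || (coord u i.+1 + e \in Yvals)].
Proof.
move=> hk; case: (ltrP 0 (flow u c m)) => [hm | hm].
  by have [i [*]] := descent_pos hm; exists i, 1; rewrite mul1r; split; auto.
case: (ltrP (flow u c 0) 0) => [h0 | h0].
  by have [i [*]] := descent_neg h0; exists i, (-1); rewrite mulN1r opprK; split; auto.
suff : potential u c = 0%N by rewrite hk.
apply: big1 => j _; apply/eqP; rewrite absz_eq0 eq_le; have := ltn_ord j => hj.
have hjm : flow u c j <= flow u c m by apply: flow_nondecr; lia.
have h0j : flow u c 0 <= flow u c j by apply: flow_nondecr; lia.
by rewrite (le_trans hjm hm) (le_trans h0 h0j).
Qed.

End YokeDescent.

Lemma walk_of_potential n m (u : vtx m) c : (0 < n)%N -> is_vertex Yvals n m u ->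
  (n%:Z %| c - u ord0)%Z -> walk Yvals n m u (zero_vtx m) (potential u c).
Proof.
move=> hn; move hk : (potential u c) => k.
elim: k u c hk => [|k IH] u c hk hu hc.
  by apply/walk0; split=> //; exact: potential_eq0 hu hc hk.
have [i [e [he hpos hl hr]]] := exists_descent hu hk.
have huv := move_moves n u i e.
set c' := c - e *+ (i == 0%N :> nat).
have hcc' : c = c' + e *+ (i == 0%N :> nat) by rewrite subrK.
apply/walkS; split => //; exists (move n u i e); first by apply/adj_moves; exists i, e.
apply: (IH _ c'); last 2 first.
- exact: move_vertex.
- by rewrite -(moves_lift huv) -hcc'.
by apply/eq_add_S; rewrite -(potential_moves_eq huv) -?hcc'.
Qed.

Lemma shorter_Ywalk_of_Zwalk n m (v : vtx m) k : (0 < n)%N -> is_vertex Yvals n m v ->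
  walk Zvals n m v (zero_vtx m) k ->
  exists2 k', (k' <= k)%N & walk Yvals n m v (zero_vtx m) k'.
Proof.
move=> hn hv /walk_potential_le [c hc hpot].
by exists (potential v c) => //; apply: walk_of_potential.
Qed.

Lemma least_iff_of_shortening (P Q : nat -> Prop) d :
  (forall k, P k -> Q k) -> (forall k, Q k -> exists2 k', (k' <= k)%N & P k') ->
  (Q d /\ forall k, (k < d)%N -> ~ Q k) <-> (P d /\ forall k, (k < d)%N -> ~ P k).
Proof.
move=> hPQ hQP; split.
  case=> /hQP [k' hk' hP] hmin.
  have -> : d = k'.
    apply/eqP; rewrite eqn_leq hk' andbT leqNgt; apply/negP => hlt.
    exact: hmin hlt (hPQ _ hP).
  by split=> // k hk /hPQ; apply: hmin; apply: leq_trans hk hk'.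
case=> hP hmin; split; first exact: hPQ.
by move=> k hk /hQP [k' hk' /hmin]; apply; apply: leq_ltn_trans hk' hk.
Qed.

Theorem corollary5p33 (n m : nat) (hn : (1 <= n)%N) (hm : (1 <= m)%N) (v : vtx m) :
  is_vertex Yvals n m v ->
  forall d : nat,
    graph_dist Zvals n m v (zero_vtx m) d <-> graph_dist Yvals n m v (zero_vtx m) d.
Proof.
(* The argument works for every m. *)
move=> hv d; apply: least_iff_of_shortening => k.
  by apply: walk_sub => x; rewrite !inE => /orP [] ->; rewrite ?orbT.
exact: shorter_Ywalk_of_Zwalk.
Qed.
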